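(* Let $(X,d)$ be a compact metric space, $f_{0,\infty}=\{f_n\}_{n=0}^\infty$ a sequence of continuous self-maps of $X$, and $A=\{k^i\}_{i=1}^{\infty}$ for some integer $k\geq1$. Then \[h_{A}(f_{0,\infty}^{k^n})=h_{A}(f_{0,\infty}),\quad n\geq1.\]
   Context: $f_i^n=f_{i+n-1}\circ\cdots\circ f_i$ ($n\ge1$), $f_i^0=\mathrm{id}$, $f_i^{-n}(B)=(f_i^n)^{-1}(B)$. For $m\ge1$, the $m$-th compositions system is $f_{0,\infty}^m=\{f_{jm}^m\}_{j=0}^\infty$, i.e. the sequence of maps $f_{jm+m-1}\circ\cdots\circ f_{jm}$. For a sequence $g_{0,\infty}$ of continuous self-maps and a sequence $A=\{a_i\}$ of nonnegative integers, $h_A(g_{0,\infty})=\sup_{\mathscr A}\limsup_{m\to\infty}\frac1m\log\mathcal N(\bigvee_{i=1}^m g_0^{-a_i}\mathscr A)$ over finite open covers $\mathscr A$ of $X$, with $\bigvee$ the common refinement, $g_0^{-a}\mathscr A=\{(g_0^a)^{-1}U:U\in\mathscr A\}$, and $\mathcal N$ the minimal cardinality of a subcover. *)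

From HB Require Import structures.
From mathcomp Require Import all_boot all_order all_algebra.
From mathcomp Require Import all_classical all_reals all_analysis.
Set Implicit Arguments. Unset Strict Implicit. Unset Printing Implicit Defensive.
Import Order.TTheory GRing.Theory Num.Theory.
Local Open Scope classical_set_scope.
Local Open Scope ring_scope.

Fixpoint ncomp (X : Type) (f : nat -> X -> X) (i n : nat) : X -> X :=
  match n with
  | 0 => id
  | n'.+1 => f (i + n')%N \o ncomp f i n'
  end.

Definition comp_system (X : Type) (f : nat -> X -> X) (m : nat) : nat -> X -> X :=
  fun j => ncomp f (j * m)%N m.

Definition finite_open_cover (X : topologicalType) (C : set (set X)) : Prop :=
  finite_set C /\ (forall U, C U -> open U) /\ (\bigcup_(U in C) U = setT).

Definition join_preim (X : Type) (g : nat -> X -> X) (a : nat -> nat)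
  (C : set (set X)) (m : nat) : set (set X) :=
  [set V | exists U : nat -> set X,
     (forall i, (1 <= i <= m)%N -> C (U i)) /\
     V = \bigcap_(i in [set i | (1 <= i <= m)%N]) (ncomp g 0 (a i) @^-1` U i)].

Definition Ncov {R : realType} (X : Type) (C : set (set X)) : \bar R :=
  ereal_inf [set (n%:R)%:E | n in [set n : nat | exists V : 'I_n -> set X,
      (forall i, C (V i)) /\ (forall x, exists i, V i x)]].

Definition hA {R : realType} (X : topologicalType) (a : nat -> nat)
  (g : nat -> X -> X) : \bar R :=
  ereal_sup [set limn_esup (fun m : nat =>
       ((m%:R)^-1 * ln (fine (@Ncov R X (join_preim g a C m))))%:E)
    | C in @finite_open_cover X].

(* Grouping the maps in blocks of K = k^n turns the exponents k^i into k^i * K = k^(i+n),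
   so h_A(f^(k^n)) is the entropy of f along the shifted sequence (k^(i+n))_i, and shifting
   does not change the entropy. With N_m and N'_m the minimal subcover sizes of the joins
   along (a_i) and (a_(i+n)) over i = 1..m, the join over 1..m+n refines the shifted join
   over 1..m and coincides with the join of the latter with the join over 1..n, so
   N'_m <= N_(m+n) <= N_n N'_m; together with N_m <= |C|^m, dividing the logarithms by m
   gives the same limsup. *)

From HB Require Import structures.
From mathcomp Require Import all_boot all_order all_algebra.
From mathcomp Require Import all_classical all_reals all_analysis.
From mathcomp Require Import ring.
Set Implicit Arguments. Unset Strict Implicit. Unset Printing Implicit Defensive.
Import Order.TTheory GRing.Theory Num.Theory.
Local Open Scope classical_set_scope.
Local Open Scope ring_scope.

Section Covers.
Variables (R : realType) (X : Type).
Implicit Types (A B : set (set X)) (s t : seq (set X)).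

Definition covering_seq A s :=
  (forall V, V \in s -> A V) /\ (forall x, exists2 V, V \in s & V x).

Definition coverable A := exists s, covering_seq A s.

Definition refines A B := forall V, A V -> exists2 W, B W & V `<=` W.

Definition cover_join A B := [set U | exists V W, [/\ A V, B W & U = V `&` W]].

(* [fine] maps the infimum +oo of an uncoverable family to 0; every family below that
   matters is coverable. *)
Definition ncov A : R := fine (@Ncov R X A).

Lemma indexed_coverP A n :
  (exists V : 'I_n -> set X, (forall i, A (V i)) /\ (forall x, exists i, V i x)) <->
  exists2 s, covering_seq A s & size s = n.
Proof.
split=> [[V [AV covV]] | [s [As covs] <-]].
  exists [seq V i | i <- enum 'I_n]; last by rewrite size_map size_enum_ord.
  split=> [W /mapP [i _ ->] // | x].
  have [i Vix] := covV x; exists (V i) => //.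
  by apply: map_f; rewrite mem_enum.
exists (nth set0 s); split=> [i | x]; first by apply: As; rewrite mem_nth.
have [V Vs Vx] := covs x.
have Vi : (index V s < size s)%N by rewrite index_mem.
by exists (Ordinal Vi); rewrite /= nth_index.
Qed.

Lemma Ncov_minimal A : coverable A -> exists s, [/\ covering_seq A s,
  @Ncov R X A = (size s)%:R%:E & forall t, covering_seq A t -> (size s <= size t)%N].
Proof.
move=> [s0 As0].
have exn : exists n, `[< exists2 s, covering_seq A s & size s = n >].
  by exists (size s0); apply/asboolP; exists s0.
case: (ex_minnP exn) => N /asboolP [s As <-] smin.
have ssmin t : covering_seq A t -> (size s <= size t)%N.
  by move=> At; apply: smin; apply/asboolP; exists t.
exists s; split=> //; apply/eqP; rewrite eq_le; apply/andP; split.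
  by apply: ereal_inf_lbound; exists (size s) => //; apply/indexed_coverP; exists s.
apply: le_ereal_inf_tmp => _ [m /indexed_coverP [t At <-] <-].
by rewrite lee_fin ler_nat ssmin.
Qed.

Lemma ncov_le_size A s : covering_seq A s -> ncov A <= (size s)%:R.
Proof.
move=> As; have [t [_ NA tmin]] := Ncov_minimal (ex_intro _ s As).
by rewrite /ncov NA /= ler_nat tmin.
Qed.

Lemma ncov_attained A : coverable A -> exists2 s, covering_seq A s & ncov A = (size s)%:R.
Proof.
by move=> cA; have [s [As Ns _]] := Ncov_minimal cA; exists s => //; rewrite /ncov Ns.
Qed.

Lemma ncov_ge0 A : coverable A -> 0 <= ncov A.
Proof. by move=> /ncov_attained [s _ ->]. Qed.

Lemma ncov_ge1 A (x0 : X) : coverable A -> 1 <= ncov A.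
Proof.
move=> /ncov_attained [s [_ covs] ->]; have [V Vs _] := covs x0.
by rewrite ler1n; case: s Vs {covs}.
Qed.

Lemma ncov_void A : (X -> False) -> ncov A = 0.
Proof.
move=> voidX; have nil_cov : covering_seq A [::] by split=> // x; case: (voidX x).
have [s [_ NA smin]] := Ncov_minimal (ex_intro _ _ nil_cov).
by have := smin _ nil_cov; rewrite leqn0 /ncov NA => /eqP ->.
Qed.

Lemma refines_covering_seq A B s : refines A B -> covering_seq A s ->
  exists2 t, covering_seq B t & size t = size s.
Proof.
move=> AB [As covs].
have /choice [F FP] V : exists W, A V -> B W /\ V `<=` W.
  have [/AB [W BW VW] | nAV] := pselect (A V); first by exists W.
  by exists set0.
exists (map F s); last by rewrite size_map.
split=> [W /mapP [V Vs ->] | x]; first by have [] := FP V (As _ Vs).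
have [V Vs Vx] := covs x; exists (F V); first exact: map_f.
by have [_] := FP V (As _ Vs); apply.
Qed.

Lemma coverable_refines A B : refines A B -> coverable A -> coverable B.
Proof. by move=> AB [s /(refines_covering_seq AB) [t Bt _]]; exists t. Qed.

Lemma ncov_refines A B : refines A B -> coverable A -> ncov B <= ncov A.
Proof.
move=> AB /ncov_attained [s As ->].
by have [t Bt <-] := refines_covering_seq AB As; apply: ncov_le_size.
Qed.

Lemma covering_seq_join A B s t : covering_seq A s -> covering_seq B t ->
  covering_seq (cover_join A B) [seq V `&` W | V <- s, W <- t].
Proof.
move=> [As covs] [Bt covt]; split=> [U /allpairsP [[V W] /= [Vs Wt ->]] | x].
  by exists V, W; split; [apply: As | apply: Bt |].
have [V Vs Vx] := covs x; have [W Wt Wx] := covt x.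
by exists (V `&` W) => //; apply: allpairs_f.
Qed.

Lemma coverable_join A B : coverable A -> coverable B -> coverable (cover_join A B).
Proof. by move=> [s As] [t Bt]; eexists; apply: covering_seq_join As Bt. Qed.

Lemma ncov_join A B : coverable A -> coverable B ->
  ncov (cover_join A B) <= ncov A * ncov B.
Proof.
move=> /ncov_attained [s As ->] /ncov_attained [t Bt ->].
rewrite -natrM -(size_allpairs (fun V W : set X => V `&` W)).
exact/ncov_le_size/covering_seq_join.
Qed.

Lemma covering_seq_preimage A s (h : X -> X) : covering_seq A s ->
  covering_seq [set h @^-1` U | U in A] [seq h @^-1` U | U <- s].
Proof.
move=> [As covs]; split=> [V /mapP [U Us ->] | x]; first by exists U => //; apply: As.
have [U Us Uhx] := covs (h x).
by exists (h @^-1` U) => //; apply: map_f.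
Qed.

Lemma finite_cover_coverable A : finite_set A -> \bigcup_(U in A) U = setT -> coverable A.
Proof.
move=> /finite_seqP [s ->] covA; exists s; split=> // x.
have [U Us Ux] : (\bigcup_(U in [set` s]) U) x by rewrite covA.
by exists U.
Qed.

End Covers.

Lemma ncompD (X : Type) (f : nat -> X -> X) i p q :
  ncomp f i (p + q) = ncomp f (i + p) q \o ncomp f i p.
Proof. by elim: q => [|q IH]; rewrite ?addn0 // addnS /= IH addnA. Qed.

Lemma ncomp_comp_system (X : Type) (f : nat -> X -> X) K :
  ncomp (comp_system f K) 0 = fun a => ncomp f 0 (a * K).
Proof.
apply/funext; elim=> [|a IH] //=.
by rewrite IH mulSnr ncompD add0n.
Qed.

Lemma join_preim_comp_system (X : Type) (f : nat -> X -> X) K a :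
  join_preim (comp_system f K) a = join_preim f (fun i => a i * K)%N.
Proof. by rewrite /join_preim ncomp_comp_system. Qed.

Section JoinPreim.
Variables (X : Type) (g : nat -> X -> X) (C : set (set X)).
Implicit Types (a : nat -> nat) (m n : nat).
Local Notation J a := (join_preim g a C).

Lemma join_preim0_covering a : covering_seq (J a 0) [:: setT].
Proof.
split=> [V | x]; last by exists setT; rewrite ?mem_seq1.
rewrite mem_seq1 => /eqP ->; exists (fun=> setT); split; first by case.
by apply/seteqP; split=> x // _; case.
Qed.

Lemma join_preim_refines_shift a m n :
  refines (J a (m + n)) (J (fun i => a (i + n)%N) m).
Proof.
have inrange i : (1 <= i <= m)%N -> (1 <= i + n <= m + n)%N.
  by move=> /andP [i1 im]; rewrite leq_add2r im (leq_trans i1) ?leq_addr.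
move=> _ [U [CU ->]].
exists (\bigcap_(i in [set i | (1 <= i <= m)%N]) (ncomp g 0 (a (i + n)%N) @^-1` U (i + n)%N)).
  by exists (fun i => U (i + n)%N); split=> // i /inrange /CU.
by move=> x Ux i /inrange /Ux.
Qed.

Lemma join_preim_split a m n :
  refines (cover_join (J a n) (J (fun i => a (i + n)%N) m)) (J a (m + n)).
Proof.
move=> _ [_ [_ [[U1 [CU1 ->]] [U2 [CU2 ->]] ->]]].
pose U i := if (i <= n)%N then U1 i else U2 (i - n)%N.
have tail i : (1 <= i <= m + n)%N -> (n < i)%N -> (1 <= i - n <= m)%N.
  by move=> /andP [_ imn] ni; rewrite subn_gt0 ni leq_subLR addnC.
exists (\bigcap_(i in [set i | (1 <= i <= m + n)%N]) (ncomp g 0 (a i) @^-1` U i)).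
  exists U; split=> // i irange; rewrite /U; case: ifP => [ilen | /negbT].
    by apply: CU1; rewrite ilen andbT; case/andP: irange.
  by rewrite -ltnNge => /(tail _ irange) /CU2.
move=> x [U1x U2x] i irange; rewrite /preimage /U /=; case: ifP => [ilen | /negbT].
  by apply: U1x; rewrite /= ilen andbT; case/andP: irange.
rewrite -ltnNge => ni; have := U2x _ (tail _ irange ni).
by rewrite /preimage /= subnK // ltnW.
Qed.

Lemma join_preim_succ a m :
  refines (cover_join (J a m) [set ncomp g 0 (a m.+1) @^-1` U | U in C]) (J a m.+1).
Proof.
move=> _ [_ [_ [[U1 [CU1 ->]] [U0 CU0 <-] ->]]].
pose U i := if (i <= m)%N then U1 i else U0.
exists (\bigcap_(i in [set i | (1 <= i <= m.+1)%N]) (ncomp g 0 (a i) @^-1` U i)).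
  exists U; split=> // i /andP [i1 im]; rewrite /U; case: ifP => // ilem.
  by apply: CU1; rewrite i1 ilem.
move=> x [U1x U0x] i /andP [i1 im]; rewrite /preimage /U /=; case: ifP => ilem.
  by apply: U1x; rewrite /= i1 ilem.
by have -> : i = m.+1 by apply/eqP; rewrite eqn_leq im ltnNge ilem.
Qed.

Variables (R : realType) (s0 : seq (set X)).
Hypothesis C_s0 : covering_seq C s0.

Lemma join_preim_coverable a m : coverable (J a m).
Proof.
elim: m => [|m IH]; first by exists [:: setT]; apply: join_preim0_covering.
apply: (coverable_refines (@join_preim_succ a m)).
apply: coverable_join IH _.
by eexists; apply: covering_seq_preimage C_s0.
Qed.

Lemma ncov_join_preim_le_pow a m : ncov R (J a m) <= (size s0)%:R ^+ m.
Proof.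
elim: m => [|m IH].
  by rewrite expr0 (le_trans (ncov_le_size R (join_preim0_covering a))).
have P_s0 := covering_seq_preimage (ncomp g 0 (a m.+1)) C_s0.
have cP : coverable [set ncomp g 0 (a m.+1) @^-1` U | U in C] by eexists; apply: P_s0.
have cJ := join_preim_coverable a m.
apply: le_trans (ncov_refines R (@join_preim_succ a m) (coverable_join cJ cP)) _.
apply: le_trans (ncov_join R cJ cP) _; rewrite exprSr.
apply: ler_pM => //; rewrite ?ncov_ge0 //.
by have := ncov_le_size R P_s0; rewrite size_map.
Qed.

Lemma ncov_join_preim_shift a m n :
  ncov R (J (fun i => a (i + n)%N) m) <= ncov R (J a (m + n)).
Proof. exact: ncov_refines (@join_preim_refines_shift a m n) (join_preim_coverable _ _). Qed.

Lemma ncov_join_preim_split a m n :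
  ncov R (J a (m + n)) <= ncov R (J a n) * ncov R (J (fun i => a (i + n)%N) m).
Proof.
have cJn := join_preim_coverable a n.
have cJm := join_preim_coverable (fun i => a (i + n)%N) m.
apply: le_trans (ncov_join R cJn cJm).
exact: ncov_refines (@join_preim_split a m n) (coverable_join cJn cJm).
Qed.
End JoinPreim.

Section LimsupShift.
Variable R : realType.
Implicit Types (u v : nat -> R).

Lemma limn_esup_le_reindex u v (h : nat -> nat) :
  (forall M, exists N, forall m, (N <= m)%N -> (M <= h m)%N) ->
  (forall e : R, 0 < e -> exists N, forall m, (N <= m)%N -> u m <= v (h m) + e) ->
  (limn_esup (fun m => (u m)%:E) <= limn_esup (fun m => (v m)%:E))%E.
Proof.
move=> h_oo uv; apply: le_ereal_inf_tmp => _ [W [M _ WM] <-].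
apply/lee_addgt0Pr => e e0.
have [N1 uvN1] := uv e e0; have [N2 hN2] := h_oo M.
pose N := maxn N1 N2.
apply: (@le_trans _ _ (ereal_sup ((fun m => (u m)%:E) @` [set m | (N <= m)%N]))).
  by apply: ereal_inf_lbound; exists [set m | (N <= m)%N] => //; exists N.
apply: ge_ereal_sup => _ [m /= /[!geq_max] /andP [m1 m2] <-].
rewrite (@le_trans _ _ ((v (h m))%:E + e%:E)%E) ?lee_fin ?uvN1 // leeD2r //.
by apply: ereal_sup_ubound; exists (h m) => //; apply/WM/hN2.
Qed.

Lemma eventually_invn_mul_le (D e : R) : 0 < e ->
  exists N, forall m, (N <= m)%N -> m%:R^-1 * D <= e.
Proof.
move=> e0; exists (Num.truncn (D / e)).+1 => m Nm.
have m0 : 0 < m%:R :> R by rewrite ltr0n (leq_trans _ Nm).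
have Dem : D / e < m%:R by rewrite (lt_le_trans (truncnS_gt _)) // ler_nat.
by rewrite mulrC ler_pdivrMr // mulrC ltW // -ltr_pdivrMr.
Qed.

Lemma limn_esup_shift u v (n : nat) (c : R) :
  (forall m, 0 <= v m) -> (forall m, v m <= u (m + n)%N) ->
  (forall m, u (m + n)%N <= u n + v m) -> (forall m, u m <= m%:R * c) ->
  limn_esup (fun m => (m%:R^-1 * v m)%:E) = limn_esup (fun m => (m%:R^-1 * u m)%:E).
Proof.
move=> v0 vu uv uc; apply/eqP; rewrite eq_le; apply/andP; split.
- apply: (limn_esup_le_reindex (h := addn^~ n)).
    by move=> M; exists M => m Mm; rewrite (leq_trans Mm) ?leq_addr.
  move=> e e0; have [N NP] := eventually_invn_mul_le (n%:R * c) e0.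
  exists (maxn N 1) => m; rewrite geq_max => /andP [Nm m1].
  have m0 : 0 < m%:R :> R by rewrite ltr0n.
  have mn0 : 0 < (m + n)%:R :> R by rewrite ltr0n addn_gt0 m1.
  set t := (m + n)%:R^-1 * u (m + n)%N.
  have tc : t <= c by rewrite /t mulrC ler_pdivrMr // mulrC.
  apply: (@le_trans _ _ (m%:R^-1 * u (m + n)%N)).
    by apply: ler_wpM2l; rewrite ?invr_ge0 ?vu.
  have -> : m%:R^-1 * u (m + n)%N = t + m%:R^-1 * (n%:R * t).
    by rewrite /t natrD; field; rewrite -natrD !gt_eqF.
  rewrite lerD2l (le_trans _ (NP m Nm)) // ler_pM2l ?invr_gt0 //.
  by apply: ler_wpM2l.
- apply: (limn_esup_le_reindex (h := subn^~ n)).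
    move=> M; exists (M + n)%N => m Mm.
    by rewrite leq_subRL ?(leq_trans (leq_addl _ _) Mm) // addnC.
  move=> e e0; have [N NP] := eventually_invn_mul_le (u n) e0.
  exists (maxn N n.+1) => m; rewrite geq_max => /andP [Nm nm].
  set j := (m - n)%N.
  have mjn : m = (j + n)%N by rewrite subnK // ltnW.
  have j0 : 0 < j%:R :> R by rewrite ltr0n subn_gt0.
  have m0 : 0 < m%:R :> R by rewrite ltr0n (leq_trans _ nm).
  apply: (@le_trans _ _ (m%:R^-1 * (u n + v j))).
    by rewrite ler_pM2l ?invr_gt0 // {1}mjn; apply: uv.
  rewrite mulrDr addrC lerD ?NP //; apply: ler_wpM2r => //.
  by rewrite lef_pV2 ?posrE // ler_nat leq_subr.
Qed.
End LimsupShift.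

Theorem hA_shift (R : realType) (X : topologicalType) (a : nat -> nat)
  (g : nat -> X -> X) (n : nat) :
  @hA R X (fun i => a (i + n)%N) g = @hA R X a g.
Proof.
rewrite /hA; congr ereal_sup; apply: eq_imagel => C [Cfin [_ Ccov]].
have [[x0] | voidX] := pselect (inhabited X); last first.
  have ncov0 A : fine (@Ncov R X A) = 0 by apply: ncov_void => x; apply: voidX.
  by congr limn_esup; apply/funext => m; rewrite !ncov0.
have [s0 C_s0] := finite_cover_coverable Cfin Ccov.
have Jge1 b m : 1 <= ncov R (join_preim g b C m).
  exact/(ncov_ge1 _ x0)/(join_preim_coverable g C_s0).
have Jpos b m : ncov R (join_preim g b C m) \is Num.pos.
  by rewrite posrE (lt_le_trans _ (Jge1 b m)).
apply: (@limn_esup_shift R (fun m => ln (ncov R (join_preim g a C m)))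
  (fun m => ln (ncov R (join_preim g (fun i => a (i + n)%N) C m))) n (ln (size s0)%:R)).
- by move=> m; apply: ln_ge0.
- by move=> m; rewrite ler_ln // (ncov_join_preim_shift g R C_s0).
- by move=> m; rewrite -lnM // ler_ln ?rpredM // (ncov_join_preim_split g R C_s0).
- have s0pos : 0 < (size s0)%:R :> R.
    by rewrite ltr0n; have [_ /(_ x0) [V]] := C_s0; case: s0 {C_s0}.
  move=> m.
  rewrite mulr_natl -lnXn // ler_ln ?Jpos ?posrE ?exprn_gt0 //.
  exact: ncov_join_preim_le_pow.
Qed.

Lemma hA_comp_system (R : realType) (X : topologicalType) (a : nat -> nat)
  (f : nat -> X -> X) (K : nat) :
  @hA R X a (comp_system f K) = @hA R X (fun i => a i * K)%N f.
Proof. by rewrite /hA join_preim_comp_system. Qed.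

Theorem proposition4p2 (R : realType) (X : pseudoMetricType R)
  (HX : hausdorff_space X) (Hc : compact [set: X])
  (f : nat -> X -> X) (Hf : forall n, continuous (f n))
  (k : nat) (Hk : (1 <= k)%N) (n : nat) (Hn : (1 <= n)%N) :
  @hA R X (fun i => (k ^ i)%N) (comp_system f (k ^ n)%N)
  = @hA R X (fun i => (k ^ i)%N) f.
Proof.
rewrite hA_comp_system (_ : (fun i => k ^ i * k ^ n)%N = (fun i => k ^ (i + n))%N).
  exact: hA_shift (fun i => k ^ i)%N f n.
by apply/funext => i; rewrite expnD.
Qed.
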